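(* Let $X \subseteq \mathbb{P}^N$ be an irreducible, nondegenerate variety over an algebraically closed field of characteristic zero, with generic rank $g$ and maximal rank $m$. Then for $1 \leq k \leq m-g$, $\sigma_k(X) = kX \subset W_{m-k}$.
   Context: For a nondegenerate variety $X\subseteq\mathbb{P}^N$, the rank of a point $p$ is the least $r$ such that $p$ lies in the linear span of some $r$ distinct points of $X$; $W_k$ is the Zariski closure of the set of points of rank exactly $k$; $g$ is the rank of a general point and $m$ the maximum rank. The join $V_1+V_2$ of two varieties is the closure of the union of lines spanned by distinct points $p\in V_1$, $q\in V_2$; $kX=X+(k-1)X$ ($k$ copies), and the $k$-th secant variety $\sigma_k(X)$ is the closure of the set of points of rank at most $k$, which equals $kX$. *)

From HB Require Import structures.
From mathcomp Require Import all_boot all_order all_algebra.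
From mathcomp Require Import mpoly.
Set Implicit Arguments. Unset Strict Implicit. Unset Printing Implicit Defensive.
Import Order.TTheory GRing.Theory.
Local Open Scope ring_scope.

(* Points of P^N over F are represented by nonzero vectors of F^(N+1)
   (homogeneous coordinates); a subset of P^N is a predicate on vectors,
   only its nonzero (and, for all sets built below, scaling-invariant)
   members being meaningful. *)
Section Proj.
Variables (F : fieldType) (N : nat).

Definition vec := 'rV[F]_N.+1.
Definition pset := vec -> Prop.

Definition coords (v : vec) : 'I_N.+1 -> F := fun i => v ord0 i.

Definition homogeneous (f : {mpoly F[N.+1]}) : Prop := exists d : nat, f \is d.-homog.

Definition zclosed (C : pset) : Prop :=
  exists I : {mpoly F[N.+1]} -> Prop,
    (forall f, I f -> homogeneous f) /\
    forall v, C v <-> (v != 0 /\ forall f, I f -> f.@[coords v] = 0).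

Definition zclosure (S : pset) : pset :=
  fun v => forall C, zclosed C -> (forall u, S u -> C u) -> C v.

Definition irreducible_variety (X : pset) : Prop :=
  [/\ zclosed X, (exists x, X x) &
      forall C1 C2, zclosed C1 -> zclosed C2 ->
        (forall x, X x -> C1 x \/ C2 x) ->
        (forall x, X x -> C1 x) \/ (forall x, X x -> C2 x)].

Definition nondegenerate_var (X : pset) : Prop :=
  forall a : vec, a != 0 -> exists x, X x /\ \sum_i a ord0 i * x ord0 i != 0.

Definition proj_eq (u v : vec) : Prop := exists c : F, c != 0 /\ u = c *: v.

Definition rank_le (X : pset) (p : vec) (r : nat) : Prop :=
  exists xs : 'I_r -> vec,
    [/\ forall i, X (xs i),
        forall i j, i != j -> ~ proj_eq (xs i) (xs j) &
        exists c : 'I_r -> F, p = \sum_i c i *: xs i].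

Definition rank_eq (X : pset) (p : vec) (k : nat) : Prop :=
  rank_le X p k /\ forall r, (r < k)%N -> ~ rank_le X p r.

Definition W (X : pset) (k : nat) : pset :=
  zclosure (fun v => v != 0 /\ rank_eq X v k).

Definition secant (X : pset) (k : nat) : pset :=
  zclosure (fun v => v != 0 /\ exists r, (r <= k)%N /\ rank_eq X v r).

Definition join (V1 V2 : pset) : pset :=
  zclosure (fun v => v != 0 /\ exists p q, [/\ V1 p, V2 q, ~ proj_eq p q &
                      exists a b : F, v = a *: p + b *: q]).

(* kX = X + (k-1)X, with 1X = X (0X is the empty set, never used) *)
Fixpoint kjoin (X : pset) (k : nat) : pset :=
  match k with
  | 0 => fun _ => False
  | 1 => X
  | k'.+1 => join X (kjoin X k')
  end.

(* generic rank g : the rank of a general point, i.e. every point of a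
   nonempty Zariski open subset of P^N has rank g *)
Definition generic_rank (X : pset) (g : nat) : Prop :=
  exists C : pset, [/\ zclosed C, (exists v, v != 0 /\ ~ C v) &
    forall v, v != 0 -> ~ C v -> rank_eq X v g].

Definition max_rank (X : pset) (m : nat) : Prop :=
  (forall v, v != 0 -> exists r, (r <= m)%N /\ rank_eq X v r) /\
  (exists v, v != 0 /\ rank_eq X v m).

End Proj.

From HB Require Import structures.
From mathcomp Require Import all_boot all_order all_algebra.
From mathcomp Require Import mpoly.
From Stdlib Require Import Classical.
From mathcomp Require Import zify.
Set Implicit Arguments. Unset Strict Implicit. Unset Printing Implicit Defensive.
Import Order.TTheory GRing.Theory.
Local Open Scope ring_scope.

(* Equality with the join: kX is the closure of the nonzero sums of at most k
   points of X.  By induction this reduces to joining X with the closure of the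
   sums of k + 1 points, and the only nontrivial inclusion follows from the fact
   that, for a closed set E and a point u, the points q whose whole line through
   u lies in E again form a closed set, cut out by the homogeneous parts of the
   polynomials f(u + _) for f vanishing on E.

   Inclusion in W_(m-k): let D be closed and contain every point of rank m - k,
   and let y have rank r <= k but lie outside D.  A general point of the line
   from y towards a point of maximal rank m lies outside D and has rank at least
   m - r >= m - k, hence more than m - k.  The general point v0 differs from y
   by a combination of r + g points of X; adding them one at a time along
   general lines keeps the point outside D and of rank > m - k, until it becomes
   a general point, of rank g <= m - k: a contradiction. *)

Section Lines.
Variables (F : closedFieldType) (N : nat).
Implicit Types (u v w : vec F N) (f : {mpoly F[N.+1]}) (P Q : F -> Prop).

Lemma meval_homogZ f d c v :
  f \is d.-homog -> f.@[coords (c *: v)] = c ^+ d * f.@[coords v].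
Proof.
move=> hf; rewrite !mevalE mulr_sumr big_seq [RHS]big_seq; apply: eq_bigr => m mf.
rewrite mulrCA; congr (_ * _).
rewrite (eq_bigr (fun i => c ^+ m i * coords v i ^+ m i)); last first.
  by move=> i _; rewrite /coords mxE exprMn.
by rewrite big_split /= prodrXr -mdegE (dhomog_mf hf mf).
Qed.

Lemma meval_line_poly f u w :
  exists p : {poly F}, forall t, f.@[coords (u + t *: w)] = p.[t].
Proof.
exists (\sum_(m <- msupp f) (f@_m)%:P *
          \prod_(i < N.+1) ((u ord0 i)%:P + (w ord0 i)%:P * 'X) ^+ m i).
move=> t; rewrite mevalE -horner_evalE rmorph_sum /=; apply: eq_bigr => m _.
rewrite rmorphM rmorph_prod /= horner_evalE hornerC; congr (_ * _).
apply: eq_bigr => i _.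
by rewrite rmorphXn /= horner_evalE hornerD hornerMX !hornerC /coords !mxE mulrC.
Qed.

Lemma row_neq0_coord v : v != 0 -> exists i, v ord0 i != 0.
Proof.
move=> vnz; apply: NNPP => H; move/eqP: vnz; apply; apply/rowP => i.
rewrite mxE; apply: NNPP => Hi; apply: H; exists i; exact/eqP.
Qed.

Definition almost_all P := exists p : {poly F}, p != 0 /\ forall t, ~~ root p t -> P t.

Lemma almost_all_exists P : almost_all P -> exists t, P t.
Proof. by case=> p [/closed_nonrootP [t pt] Hp]; exists t; apply: Hp. Qed.

Lemma almost_allW P Q : (forall t, P t -> Q t) -> almost_all P -> almost_all Q.
Proof. by move=> PQ [p [p0 Hp]]; exists p; split=> // t /Hp /PQ. Qed.

Lemma almost_allI P Q :
  almost_all P -> almost_all Q -> almost_all (fun t => P t /\ Q t).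
Proof.
case=> p [p0 Hp] [q [q0 Hq]]; exists (p * q); split; first by rewrite mulf_neq0.
by move=> t; rewrite rootM negb_or => /andP[/Hp ? /Hq ?].
Qed.

Lemma almost_all_neq0 : almost_all (fun t => t != 0).
Proof. by exists 'X; split=> [|t]; rewrite ?polyX_eq0 ?rootX. Qed.

Lemma almost_all_meval_neq0 f u w t0 : f.@[coords (u + t0 *: w)] != 0 ->
  almost_all (fun t => f.@[coords (u + t *: w)] != 0).
Proof.
have [p Hp] := meval_line_poly f u w; rewrite Hp => pt0; exists p; split.
  by apply: contraNneq pt0 => ->; rewrite horner0.
by move=> t; rewrite Hp.
Qed.

Lemma almost_all_line_neq0 u w : u != 0 -> almost_all (fun t => u + t *: w != 0).
Proof.
case/row_neq0_coord=> i ui.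
have /almost_all_meval_neq0 : ('X_i).@[coords (u + 0 *: w)] != 0.
  by rewrite scale0r addr0 mevalXU.
by apply: almost_allW => t; apply: contraNneq => ->; rewrite mevalXU /coords mxE.
Qed.

Lemma horner_sum_eq0 n (a : nat -> F) :
  (forall s, \sum_(d < n) a d * s ^+ d = 0) -> forall d, (d < n)%N -> a d = 0.
Proof.
move=> van d dn; have p0 : \poly_(i < n) a i = 0.
  apply/eqP; apply: contraT => /closed_nonrootP [s].
  by rewrite /root horner_poly van eqxx.
by have := congr1 (fun p : {poly F} => p`_d) p0; rewrite coef_poly dn coef0.
Qed.

End Lines.

Section Zariski.
Variables (F : closedFieldType) (N : nat).
Implicit Types (u v q : vec F N) (f : {mpoly F[N.+1]}) (S C E : pset F N).

Lemma zclosure_subset S u : S u -> zclosure S u.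
Proof. by move=> Su C _ /(_ u Su). Qed.

Lemma eq_zclosure S S' :
  (forall u, S u <-> S' u) -> forall v, zclosure S v <-> zclosure S' v.
Proof. by move=> H v; split=> Hv C cC SC; apply: Hv => // u /H /SC. Qed.

Lemma zclosed_neq0 C v : zclosed C -> C v -> v != 0.
Proof. by case=> I [_ HI] /HI []. Qed.

Lemma zclosed_zclosure S : (forall u, S u -> u != 0) -> zclosed (zclosure S).
Proof.
move=> Snz.
exists (fun f => exists C I, [/\ forall g, I g -> homogeneous g,
   forall v, C v <-> (v != 0 /\ forall g, I g -> g.@[coords v] = 0),
   forall u, S u -> C u & I f]).
split=> [f [C [I [HI _ _ If]]]|v]; first exact: HI.
split=> [Hv|[vnz Hf] C [I [HIh HC]] SC].
- split=> [|f [C [I [HIh HC SC If]]]].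
    apply: (Hv (fun v => v != 0)) => //.
    by exists (fun _ => False); split=> // w; split=> [->|[]].
  by have /HC [_ ->] // : C v by apply: Hv => //; exists I.
- by apply/HC; split=> // f If; apply: Hf; exists C, I.
Qed.

Lemma zclosedZ C c v : zclosed C -> C v -> c != 0 -> C (c *: v).
Proof.
case=> I [HI HC] /HC [vnz Hv] c0; apply/HC; split.
  by rewrite scaler_eq0 negb_or c0.
by move=> f If; have [d hd] := HI f If; rewrite (meval_homogZ _ _ hd) Hv ?mulr0.
Qed.

Lemma zclosed_separate C v : zclosed C -> v != 0 -> ~ C v ->
  exists f, (forall u, C u -> f.@[coords u] = 0) /\ f.@[coords v] != 0.
Proof.
case=> I [_ HC] vnz nCv; apply: NNPP => nf; apply: nCv; apply/HC.
split=> // f If; apply: NNPP => /eqP fv; apply: nf; exists f; split=> // u.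
by case/HC=> _ /(_ f If).
Qed.

Definition shift_mpoly u f : {mpoly F[N.+1]} :=
  f \mPo [tuple (u ord0 i)%:MP + 'X_i | i < N.+1].

Lemma meval_line_homog_parts u f q s :
  f.@[coords (u + s *: q)] =
  \sum_(d < mmeasure mdeg (shift_mpoly u f))
     (pihomog mdeg d (shift_mpoly u f)).@[coords q] * s ^+ d.
Proof.
have -> : f.@[coords (u + s *: q)] = (shift_mpoly u f).@[coords (s *: q)].
  rewrite comp_mpoly_meval; apply: meval_eq => i.
  by rewrite tnth_mktuple mevalD mevalC mevalXU /coords !mxE.
rewrite {1}(pihomog_partitionE (leqnn (mmeasure mdeg (shift_mpoly u f)))).
rewrite raddf_sum /=; apply: eq_bigr => d _.
by rewrite (meval_homogZ _ _ (pihomogP _ _ _)) mulrC.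
Qed.

(* The guard is needed because a closed set never contains 0. *)
Definition line_cone E u : pset F N :=
  fun q => q != 0 /\ forall s, u + s *: q != 0 -> E (u + s *: q).

(* The homogeneous parts of f(u + .) cut out the cone: f(u + s q) is a
   polynomial in s whose coefficients are these parts evaluated at q. *)
Lemma zclosed_line_cone E u :
  zclosed E -> (exists e, E e) -> zclosed (line_cone E u).
Proof.
case=> I [HI HE] [e Ee].
have I0 f : I f -> f.@[coords 0] = 0.
  move=> If; have [d hd] := HI f If; have [_ /(_ f If) fe] := (HE e).1 Ee.
  by rewrite -(scale0r e) (meval_homogZ _ _ hd) fe mulr0.
exists (fun h => exists f (d : 'I_(mmeasure mdeg (shift_mpoly u f))),
           I f /\ h = pihomog mdeg d (shift_mpoly u f)).
split=> [h [f [d [_ ->]]]|q]; first by exists (nat_of_ord d); apply: pihomogP.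
split=> [[qnz Hq]|[qnz Hq]]; split=> //.
- move=> _ [f [d [If ->]]].
  pose a d := (pihomog mdeg d (shift_mpoly u f)).@[coords q].
  apply: (horner_sum_eq0 (a := a) _ (ltn_ord d)) => s.
  rewrite -meval_line_homog_parts.
  have [->|nz] := eqVneq (u + s *: q) 0; first exact: I0.
  by have [_ ->] := (HE _).1 (Hq s nz).
- move=> s nz; apply/HE; split=> // f If.
  by rewrite meval_line_homog_parts big1 // => d _; rewrite Hq ?mul0r //; exists f, d.
Qed.

End Zariski.

Section Combinations.
Variables (F : fieldType) (N : nat) (X : pset F N).
Implicit Types (u v w x : vec F N).

Definition lincomb n v := exists (xs : 'I_n -> vec F N) (c : 'I_n -> F),
  (forall i, X (xs i)) /\ v = \sum_i c i *: xs i.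

Definition comb_le k v := v != 0 /\ exists n, (n <= k)%N /\ lincomb n v.

Definition rank_geq b v := forall n, lincomb n v -> (b <= n)%N.

Lemma proj_eq_sym u v : proj_eq u v -> proj_eq v u.
Proof.
case=> c [c0 ->]; exists c^-1; split; first by rewrite invr_eq0.
by rewrite scalerA mulVf // scale1r.
Qed.

Lemma proj_eq_trans u v w : proj_eq u v -> proj_eq v w -> proj_eq u w.
Proof.
case=> c [c0 ->] [d [d0 ->]]; exists (c * d); split; first by rewrite mulf_neq0.
by rewrite scalerA.
Qed.

Lemma lincomb1 x c : X x -> lincomb 1 (c *: x).
Proof. by move=> Xx; exists (fun _ => x), (fun _ => c); split=> //; rewrite big_ord1. Qed.

Lemma lincombD v w n n' : lincomb n v -> lincomb n' w -> lincomb (n + n') (v + w).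
Proof.
case=> xs [c [Hx ->]] [ys [d [Hy ->]]].
exists (fun i => match split i with inl j => xs j | inr j => ys j end).
exists (fun i => match split i with inl j => c j | inr j => d j end).
split=> [i|]; first by case: (split i).
rewrite big_split_ord /=; congr (_ + _); apply: eq_bigr => i _.
  by rewrite -/(unsplit (inl i)) unsplitK.
by rewrite -/(unsplit (inr i)) unsplitK.
Qed.

Lemma lincombZ v n c : lincomb n v -> lincomb n (c *: v).
Proof.
case=> xs [d [Hx ->]]; exists xs, (fun i => c * d i); split=> //.
by rewrite scaler_sumr; apply: eq_bigr => i _; rewrite scalerA.
Qed.

Lemma lincomb0_eq0 v : lincomb 0 v -> v = 0.
Proof. by case=> xs [c [_ ->]]; rewrite big_ord0. Qed.

Lemma lincombS v n :
  lincomb n.+1 v -> exists c x w, [/\ X x, lincomb n w & v = c *: x + w].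
Proof.
case=> xs [c [Hx ->]]; rewrite big_ord_recl.
exists (c ord0), (xs ord0), (\sum_(i < n) c (lift ord0 i) *: xs (lift ord0 i)).
by split=> //; exists (fun i => xs (lift ord0 i)), (fun i => c (lift ord0 i)).
Qed.

Lemma rank_le_lincomb v r : rank_le X v r -> lincomb r v.
Proof. by case=> xs [Hx _ [c ->]]; exists xs, c. Qed.

(* Either x is proportional to one of the points spanning w and gets absorbed,
   or it is a new distinct point. *)
Lemma rank_le_add_point x w r c : X x -> rank_le X w r ->
  exists r', (r' <= r.+1)%N /\ rank_le X (c *: x + w) r'.
Proof.
move=> Xx [ys [Hy Hd [ds ->]]].
have [[j [e [e0 ->]]]|Hn] := classic (exists j, proj_eq x (ys j)).
  exists r; split=> //; exists ys; split=> //.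
  exists (fun i => ds i + (if i == j then c * e else 0)).
  under [RHS]eq_bigr do rewrite scalerDl.
  rewrite big_split /= addrC scalerA; congr (_ + _).
  by rewrite (bigD1 j) //= eqxx big1 ?addr0 // => i /negbTE ->; rewrite scale0r.
exists r.+1; split=> //.
exists (fun i => if unlift ord0 i is Some j then ys j else x); split.
- by move=> i; case: (unlift ord0 i).
- move=> i i'.
  case: (unliftP ord0 i) => [j ->|->]; case: (unliftP ord0 i') => [j' ->|->] //.
  + by move=> ne; apply: Hd; apply: contraNneq ne => ->.
  + by rewrite ?liftK ?unlift_none => _ /proj_eq_sym He; apply: Hn; exists j.
  + by rewrite ?liftK ?unlift_none => _ He; apply: Hn; exists j'.
- exists (fun i => if unlift ord0 i is Some j then ds j else c).
  rewrite big_ord_recl unlift_none; congr (_ + _).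
  by apply: eq_bigr => i _; rewrite liftK.
Qed.

Lemma lincomb_rank_le v n : lincomb n v -> exists r, (r <= n)%N /\ rank_le X v r.
Proof.
elim: n v => [|n IH] v.
  move/lincomb0_eq0 => ->; exists 0%N; split=> //.
  by exists (fun _ => 0); split=> [[]|[]|]; last by exists (fun _ => 0); rewrite big_ord0.
case/lincombS=> c [x [w [Xx /IH [r [rn Hw]] ->]]].
have [r' [r'r Hr']] := rank_le_add_point c Xx Hw.
by exists r'; split=> //; apply: leq_trans r'r _.
Qed.

Lemma rank_le_rank_eq v n : rank_le X v n -> exists r, (r <= n)%N /\ rank_eq X v r.
Proof.
elim: n {-2}n (leqnn n) => [|n IH] n' Hn' Hv.
  by exists n'; split=> //; split=> // r; rewrite leqn0 in Hn'; rewrite (eqP Hn').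
have [[r [rn Hr]]|Hno] := classic (exists r, (r < n')%N /\ rank_le X v r).
  have [r' [r'r Hr']] := IH r (leq_trans rn Hn') Hr.
  by exists r'; split=> //; apply: leq_trans r'r (ltnW rn).
by exists n'; split=> //; split=> // r rn Hr; apply: Hno; exists r.
Qed.

Lemma comb_le_rank_eq k v :
  (v != 0 /\ exists r, (r <= k)%N /\ rank_eq X v r) <-> comb_le k v.
Proof.
split=> [[vnz [r [rk [Hr _]]]]|[vnz [n [nk /lincomb_rank_le [r [rn Hr]]]]]].
  by split=> //; exists r; split=> //; apply: rank_le_lincomb.
have [r' [r'r Hr']] := rank_le_rank_eq Hr.
by split=> //; exists r'; split=> //; lia.
Qed.

Lemma rank_eq_geq v r : rank_eq X v r -> rank_geq r v.
Proof.
case=> _ Hmin n /lincomb_rank_le [r' [r'n Hr']].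
by case: (leqP r n) => // nr; case: (Hmin r' (leq_ltn_trans r'n nr)).
Qed.

Lemma rank_geq_add_point b z x t : X x -> rank_geq b.+1 z -> rank_geq b (z + t *: x).
Proof.
move=> Xx Hz n Hn; have /Hz : lincomb (n + 1) z.
  by rewrite -[z](addrK (t *: x)) -scaleNr; apply: lincombD => //; apply: lincomb1.
by rewrite addn1.
Qed.

Lemma rank_geq_sub m p r y t : rank_eq X p m -> lincomb r y -> t != 0 ->
  rank_geq (m - r) (y + t *: p).
Proof.
move=> Hp Hy t0 n Hn.
have : lincomb (n + r) p.
  have -> : p = t^-1 *: (y + t *: p) + (- t^-1) *: y.
    by rewrite scalerDr scalerA mulVf // scale1r scaleNr addrAC subrr add0r.
  by apply: lincombD; apply: lincombZ.
by move/(rank_eq_geq Hp); lia.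
Qed.

Lemma rank_geqS_notin D j z : (forall v, v != 0 -> exists r, rank_eq X v r) ->
  (forall v, v != 0 -> rank_eq X v j -> D v) ->
  rank_geq j z -> z != 0 -> ~ D z -> rank_geq j.+1 z.
Proof.
move=> ranked HD Hz znz nDz; have [r Hr] := ranked z znz.
have jr : (j <= r)%N by apply: Hz; apply: rank_le_lincomb; case: Hr.
have rj : r != j by apply/eqP => E; apply: nDz; apply: HD; rewrite -?E.
by move=> n /(rank_eq_geq Hr); lia.
Qed.

End Combinations.

Section HighRank.
Variables (F : closedFieldType) (N : nat) (X : pset F N).
Variables (g j : nat) (fG : {mpoly F[N.+1]}) (D : pset F N).
Hypothesis ranked : forall v, v != 0 -> exists r, rank_eq X v r.
Hypothesis generic_fG : forall v, v != 0 -> fG.@[coords v] != 0 -> rank_eq X v g.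
Hypothesis zclosed_D : zclosed D.
Hypothesis rank_j_in_D : forall v, v != 0 -> rank_eq X v j -> D v.
Hypothesis leq_g_j : (g <= j)%N.
Implicit Types (v y z : vec F N).

Lemma high_rank_nongeneric n (xs : 'I_n -> vec F N) z (tau : 'I_n -> F) :
  (forall i, X (xs i)) -> rank_geq X j.+1 z -> z != 0 -> ~ D z ->
  fG.@[coords (z + \sum_i tau i *: xs i)] = 0.
Proof.
elim: n xs z tau => [|n IH] xs z tau Hx Hz znz nDz; apply/eqP; apply: contraT => fz.
  rewrite big_ord0 addr0 in fz; have [/rank_le_lincomb /Hz] := generic_fG znz fz.
  by rewrite ltnNge leq_g_j.
move: fz; rewrite big_ord_recl addrA addrAC.
set x := xs ord0; set w := \sum_(i < n) _ => fz.
have [fD [fD_D fDz]] := zclosed_separate zclosed_D znz nDz.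
have fDz0 : fD.@[coords (z + 0 *: x)] != 0 by rewrite scale0r addr0.
have [t [[fGt fDt] zt]] := almost_all_exists (almost_allI
  (almost_allI (almost_all_meval_neq0 fz) (almost_all_meval_neq0 fDz0))
  (almost_all_line_neq0 x znz)).
have nDzt : ~ D (z + t *: x) by move/fD_D/eqP; rewrite (negbTE fDt).
have Hzt : rank_geq X j.+1 (z + t *: x).
  apply: rank_geqS_notin ranked rank_j_in_D _ zt nDzt.
  exact: (rank_geq_add_point (t := t) (Hx ord0) Hz).
have := IH (fun i => xs (lift ord0 i)) (z + t *: x) (fun i => tau (lift ord0 i)).
move=> /(_ (fun i => Hx _) Hzt zt nDzt).
by rewrite addrAC => /eqP; rewrite (negbTE fGt).
Qed.

Variables (m : nat) (p v0 : vec F N).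
Hypothesis rank_p : rank_eq X p m.
Hypothesis generic_v0 : fG.@[coords v0] != 0.
Hypothesis lincomb_v0 : lincomb X g v0.

Lemma lincomb_in_closed y r : y != 0 -> lincomb X r y -> (r + j <= m)%N -> D y.
Proof.
move=> ynz Hy rjm; apply: NNPP => nDy.
have [xs [c [Hx Ev0]]] : lincomb X (r + g) (- y + v0).
  by rewrite -scaleN1r; apply: lincombD => //; apply: lincombZ.
have v0E : y + \sum_i c i *: xs i = v0 by rewrite -Ev0 addNKr.
have [fD [fD_D fDy]] := zclosed_separate zclosed_D ynz nDy.
have fGy0 : fG.@[coords ((y + \sum_i c i *: xs i) + 0 *: p)] != 0.
  by rewrite scale0r addr0 v0E.
have fDy0 : fD.@[coords (y + 0 *: p)] != 0 by rewrite scale0r addr0.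
have [t [[[t0 fGt] fDt] yt]] := almost_all_exists (almost_allI
  (almost_allI (almost_allI (@almost_all_neq0 F) (almost_all_meval_neq0 fGy0))
     (almost_all_meval_neq0 fDy0))
  (almost_all_line_neq0 p ynz)).
have nDyt : ~ D (y + t *: p) by move/fD_D/eqP; rewrite (negbTE fDt).
have Hyt : rank_geq X j.+1 (y + t *: p).
  apply: rank_geqS_notin ranked rank_j_in_D _ yt nDyt => n.
  by move/(rank_geq_sub rank_p Hy t0); lia.
have := high_rank_nongeneric c Hx Hyt yt nDyt.
by rewrite addrAC => /eqP; rewrite (negbTE fGt).
Qed.

End HighRank.

Section Joins.
Variables (F : closedFieldType) (N : nat) (X : pset F N).
Hypothesis zclosed_X : zclosed X.
Implicit Types (u v w x : vec F N) (V : pset F N).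

Lemma comb_le_point k x : (1 <= k)%N -> X x -> comb_le X k x.
Proof.
move=> k1 Xx; split; first exact: zclosed_neq0 zclosed_X Xx.
by exists 1%N; split=> //; rewrite -[x]scale1r; apply: lincomb1.
Qed.

Lemma join_ext V (V' : pset F N) :
  (forall v, V v <-> V' v) -> forall v, join X V v <-> join X V' v.
Proof.
move=> H; apply: eq_zclosure => u; split=> [] [unz [p [q [Xp Vq npq Hu]]]];
  by split=> //; exists p, q; split=> //; apply/H.
Qed.

Lemma zclosure_comb_le1 v : zclosure (comb_le X 1) v <-> X v.
Proof.
split=> [Hv|/(comb_le_point (leqnn 1)) /zclosure_subset //].
apply: Hv => // u [unz [n [+ Hu]]]; case: n Hu => [|[|//]] Hu _.
  by move: unz; rewrite (lincomb0_eq0 Hu) eqxx.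
have [c [x [w [Xx /lincomb0_eq0 -> uE]]]] := lincombS Hu.
move: unz; rewrite uE addr0 => unz; apply: zclosedZ => //.
by apply: contraNneq unz => ->; rewrite scale0r.
Qed.

Lemma join_zclosure_comb_le k v :
  join X (zclosure (comb_le X k.+1)) v -> zclosure (comb_le X k.+2) v.
Proof.
move=> Hv E cE SE; apply: Hv => // u [unz [p [q [Xp Kq _ [a [b uE]]]]]].
rewrite uE in unz *.
have cone : line_cone E (a *: p) q.
  apply: Kq => [|q' [q'nz [n [nk Hq']]]].
    by apply: zclosed_line_cone => //; exists p; apply/SE/comb_le_point.
  split=> // s nz; apply: SE; split=> //; exists (1 + n)%N; split; first lia.
  by apply: lincombD; [apply: lincomb1 | apply: lincombZ].
by case: cone => _; apply.
Qed.

Hypothesis two_points : exists x1 x2, [/\ X x1, X x2 & ~ proj_eq x1 x2].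

Lemma exists_point_not_proj_eq v : exists x, X x /\ ~ proj_eq v x.
Proof.
have [x1 [x2 [X1 X2 n12]]] := two_points.
have [H1|] := classic (proj_eq v x1); last by exists x1.
have [H2|] := classic (proj_eq v x2); last by exists x2.
by case: n12; apply: proj_eq_trans (proj_eq_sym H1) H2.
Qed.

Lemma zclosure_comb_le_join k v :
  zclosure (comb_le X k.+2) v -> join X (zclosure (comb_le X k.+1)) v.
Proof.
move=> Hv E cE SE; apply: Hv => // u [unz [[|n] [nk Hu]]].
  by move: unz; rewrite (lincomb0_eq0 Hu) eqxx.
apply: SE; split=> //.
have [c [x [w [Xx Hw uE]]]] := lincombS Hu.
have [[e we]|[wnz nwx]] : (exists e, w = e *: x) \/ (w != 0 /\ ~ proj_eq w x).
- have [->|wnz] := eqVneq w 0; first by left; exists 0; rewrite scale0r.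
  have [[e [_ ->]]|nwx] := classic (proj_eq w x); [by left; exists e | by right].
- have Xu : X u.
    have uE' : u = (c + e) *: x by rewrite uE we scalerDl.
    rewrite uE' in unz *; apply: zclosedZ => //.
    by apply: contraNneq unz => ->; rewrite scale0r.
  have [x' [Xx' nux']] := exists_point_not_proj_eq u.
  exists u, x'; split=> //; first exact: zclosure_subset (comb_le_point (ltn0Sn k) Xx').
  by exists 1, 0; rewrite scale1r scale0r addr0.
- exists x, w; split=> //.
  + by apply: zclosure_subset; split=> //; exists n; split.
  + by move/proj_eq_sym.
  + by exists c, 1; rewrite scale1r.
Qed.

Lemma kjoin_zclosure_comb_le k :
  (1 <= k)%N -> forall v, kjoin X k v <-> zclosure (comb_le X k) v.
Proof.
elim: k => [//|[|k] IH] _ v; first by rewrite zclosure_comb_le1.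
rewrite [kjoin _ _]/= (join_ext (IH isT)).
by split; [apply: join_zclosure_comb_le | apply: zclosure_comb_le_join].
Qed.

End Joins.

Section Ranks.
Variables (F : closedFieldType) (N : nat) (X : pset F N).

Lemma generic_rank_gt0 g : generic_rank X g -> (0 < g)%N.
Proof.
case=> C [_ [v [vnz nCv]] Hgen]; case: g Hgen => // /(_ v vnz nCv) [].
by move/rank_le_lincomb/lincomb0_eq0 => v0; rewrite v0 eqxx in vnz.
Qed.

Lemma rank_le_two_points p m : (1 < m)%N -> rank_le X p m ->
  exists x1 x2, [/\ X x1, X x2 & ~ proj_eq x1 x2].
Proof.
move=> m2 [xs [Hx Hd _]].
by exists (xs (Ordinal (ltnW m2))), (xs (Ordinal m2)); split=> //; apply: Hd.
Qed.

Lemma secant_eq_kjoin k : zclosed X ->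
  (exists x1 x2, [/\ X x1, X x2 & ~ proj_eq x1 x2]) -> (1 <= k)%N ->
  forall v, secant X k v <-> kjoin X k v.
Proof.
move=> cX two k1 v.
apply: iff_trans (iff_sym (kjoin_zclosure_comb_le cX two k1 v)).
exact: eq_zclosure (comb_le_rank_eq X k) v.
Qed.

Lemma secant_subset_W g m k : generic_rank X g -> max_rank X m ->
  (1 <= k)%N -> (k <= m - g)%N -> forall v, secant X k v -> W X (m - k) v.
Proof.
move=> [C [cC [v0 [v0nz nCv0]] Hgen]] [Hmax [p [_ Hp]]] k1 km v Hv.
have [fG [fG_C fGv0]] := zclosed_separate cC v0nz nCv0.
have generic_fG u : u != 0 -> fG.@[coords u] != 0 -> rank_eq X u g.
  by move=> unz fu; apply: Hgen => // /fG_C /eqP; rewrite (negbTE fu).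
have ranked u : u != 0 -> exists r, rank_eq X u r.
  by move=> /Hmax [r [_ Hr]]; exists r.
have [Hv0 _] := generic_fG _ v0nz fGv0.
apply: Hv => [|y [ynz [r [rk [Hy _]]]] D cD HD].
  by apply: zclosed_zclosure => u [].
have HD' u : u != 0 -> rank_eq X u (m - k) -> D u by move=> unz Hu; apply: HD.
apply: (lincomb_in_closed ranked generic_fG cD HD' _ Hp fGv0 (rank_le_lincomb Hv0)
          ynz (rank_le_lincomb Hy)); lia.
Qed.

End Ranks.

Theorem corollary3p3 (F : closedFieldType) (hchar : [pchar F] =i pred0)
    (N : nat) (X : pset F N) (g m : nat) :
  irreducible_variety X -> nondegenerate_var X ->
  generic_rank X g -> max_rank X m ->
  forall k : nat, (1 <= k)%N -> (k <= m - g)%N ->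
    (forall v, secant X k v <-> kjoin X k v) /\
    (forall v, secant X k v -> W X (m - k) v).
Proof.
move=> [cX _ _] _ Hgen Hmax k k1 km.
split; last exact: (secant_subset_W Hgen Hmax k1 km).
have g0 := generic_rank_gt0 Hgen.
have [_ [p [_ [Hp _]]]] := Hmax.
apply: secant_eq_kjoin => //.
apply: (rank_le_two_points _ Hp); lia.
Qed.
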